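(* Let $G=(V,E)$ be a graph with $E=\{e_1,\dots,e_m\}$, let $t\le\lfloor m/2\rfloor$, and let $D=(E,A)$ be the digraph with $A=\{(e_i,e_{i+t}) : i\in\{1,\dots,t\}\}$. Let $\ell,u$ be such that $\ell(e)=u(e)=|\mathrm{dep}(e)|\in\{0,1\}$ for every $e\in E$. Let $S=\{e_i: i\in\{t+1,\dots,2t\}\}$, let $C_1,\dots,C_k$ be the connected components of $G-S$, and let $H$ be the multigraph with vertex set $\{C_1,\dots,C_k\}$ having, for each edge $e\in S$ whose endpoints lie in distinct components $C_i\neq C_j$, one edge between $C_i$ and $C_j$ (edges of $S$ with both endpoints in the same component are discarded). For $S'\subseteq S$, let $H(S')$ be the spanning sub-multigraph of $H$ (vertex set $\{C_1,\dots,C_k\}$) consisting of the edges corresponding to elements of $S'$. If there exists $S'\subseteq S$ such that $H(S')$ is a spanning tree of $H$ and the graph $(V,\mathrm{dep}(S'))$ is acyclic, then $G$ has a spanning tree that $(\ell,u)$-satisfies $D$. Conversely, the edge set of any spanning tree of $G$ that $(\ell,u)$-satisfies $D$ contains such a subset $S'$.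
   Context: For $e\in E$, $\mathrm{dep}(e)=\{e'\in E:(e',e)\in A\}$, and for $E'\subseteq E$, $\mathrm{dep}(E')=\bigcup_{e\in E'}\mathrm{dep}(e)$. A subgraph $T$ of $G$ $(\ell,u)$-satisfies $D$ if $\ell(e)\le|\mathrm{dep}(e)\cap E(T)|\le u(e)$ for every $e\in E(T)$. *)

From mathcomp Require Import all_boot.
Set Implicit Arguments. Unset Strict Implicit. Unset Printing Implicit Defensive.

(* A (multi)graph is given by a vertex finType W, a finite edge index type I,
   and an endpoint map ends : I -> W * W.  Edge sets are {set I}. *)
Section Graphs.
Variables (W : finType) (I : finType) (ends : I -> W * W).

Definition adj (F : {set I}) : rel W :=
  fun x y => [exists e in F, (ends e == (x, y)) || (ends e == (y, x))].

Definition connected_on (X : {set W}) (F : {set I}) : Prop :=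
  forall x y, x \in X -> y \in X -> connect (adj F) x y.

(* the graph with edge set F contains no cycle: no edge of F (including loops
   and parallel edges) lies on a cycle, i.e. its endpoints are not connected
   after removing it *)
Definition acyclic (F : {set I}) : Prop :=
  forall e, e \in F -> ~~ connect (adj (F :\ e)) (ends e).1 (ends e).2.

Definition is_spanning_tree (X : {set W}) (F : {set I}) : Prop :=
  connected_on X F /\ acyclic F.
End Graphs.

Definition dep (I : finType) (A : rel I) (e : I) : {set I} := [set e' | A e' e].
Definition depS (I : finType) (A : rel I) (F : {set I}) : {set I} :=
  \bigcup_(e in F) dep A e.

Definition lu_satisfies (I : finType) (A : rel I) (l u : I -> nat)
  (T : {set I}) : Prop :=
  forall e, e \in T -> l e <= #|dep A e :&: T| <= u e.

(* A simple graph on V with edges e_0, ..., e_(m-1) (0-based). *)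
Definition simple_graph (V : finType) (m : nat) (ends : 'I_m -> V * V) : Prop :=
  (forall e, (ends e).1 != (ends e).2) /\
  (forall e f, (ends e == ends f) || (ends e == ((ends f).2, (ends f).1)) -> e = f).

(* The specific digraph of the lemma: arcs (e_i, e_(i+t)), i = 1..t
   (0-based: (i, i+t) for i < t). *)
Definition shiftA (m t : nat) : rel 'I_m :=
  fun i j => (i < t) && (nat_of_ord j == i + t).

(* S = {e_(t+1), ..., e_(2t)} (0-based: t <= j < 2t) *)
Definition Sset (m t : nat) : {set 'I_m} := [set j : 'I_m | t <= j < t + t].

Definition compo (V : finType) (m : nat) (ends : 'I_m -> V * V)
  (S : {set 'I_m}) (x : V) : {set V} :=
  [set y | connect (adj ends (~: S)) x y].

(* vertex set of H: the components of G - S *)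
Definition comps (V : finType) (m : nat) (ends : 'I_m -> V * V)
  (S : {set 'I_m}) : {set {set V}} :=
  [set compo ends S x | x : V].

(* endpoints in H of an edge of S: the components of its endpoints *)
Definition Hends (V : finType) (m : nat) (ends : 'I_m -> V * V)
  (S : {set 'I_m}) (e : 'I_m) : {set V} * {set V} :=
  (compo ends S (ends e).1, compo ends S (ends e).2).

Definition Hedges (V : finType) (m : nat) (ends : 'I_m -> V * V)
  (S : {set 'I_m}) : {set 'I_m} :=
  [set e in S | (Hends ends S e).1 != (Hends ends S e).2].

Definition H_spanning_tree (V : finType) (m : nat) (ends : 'I_m -> V * V)
  (S S' : {set 'I_m}) : Prop :=
  is_spanning_tree (Hends ends S) (comps ends S) (S' :&: Hedges ends S).

Arguments shiftA : clear implicits.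
Arguments Sset : clear implicits.

From mathcomp Require Import all_boot.
Set Implicit Arguments. Unset Strict Implicit. Unset Printing Implicit Defensive.

(* Contract each component of G - S to a point.  Every dependency arc starts
   outside S and ends in S, so dep(S') consists of edges inside components and
   disappears under the contraction: an acyclic dep(S') together with the edges
   of a spanning tree H(S') is acyclic in G, and with G - S it connects G.  A
   spanning tree of G squeezed between dep(S') + S' and (G - S) + dep(S') + S'
   meets S only in S', and contains dep(e) for each e in S'; as l = u = |dep|,
   this is (l,u)-satisfaction.  Conversely, a satisfying spanning tree T
   contains dep(e) for each of its edges e, its image in H is connected, and a
   spanning tree of H extracted from that image has its dependencies inside the
   acyclic T. *)

Lemma connect_ind (T : finType) (r : rel T) (P : T -> Prop) x :
  P x -> (forall y z, P y -> r y z -> P z) -> forall y, connect r x y -> P y.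
Proof.
move=> Px Pr y /connectP[p + ->]; elim: p x Px => //= z p IHp x Px /andP[rxz].
exact/IHp/(Pr _ _ Px rxz).
Qed.

Section Graphs.
Variables (W I : finType) (ends : I -> W * W).
Implicit Types (F G B : {set I}) (X : {set W}).

Local Notation conn F := (connect (adj ends F)).

Lemma adjP F x y :
  reflect (exists2 g, g \in F & ends g = (x, y) \/ ends g = (y, x)) (adj ends F x y).
Proof.
apply: (iffP existsP) => [[g /andP[gF /orP[]/eqP Eg]]|[g gF [] Eg]].
- by exists g; first exact: gF; left.
- by exists g; first exact: gF; right.
all: by exists g; rewrite gF Eg eqxx ?orbT.
Qed.

Lemma adj_sym F : symmetric (adj ends F).
Proof. by move=> x y; apply/adjP/adjP => -[g gF Eg]; exists g => //; case: Eg; auto. Qed.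

Lemma connect_adjC F x y : conn F x y = conn F y x.
Proof. exact/sym_connect_sym/adj_sym. Qed.

Lemma adj_edge F g : g \in F -> adj ends F (ends g).1 (ends g).2.
Proof. by move=> gF; apply/adjP; exists g; last by left; case: (ends g). Qed.

Lemma connect_edge F g : g \in F -> conn F (ends g).1 (ends g).2.
Proof. by move/adj_edge/connect1. Qed.

Lemma connect_adjS F F' : F \subset F' -> subrel (conn F) (conn F').
Proof.
move=> sFF'; apply: connect_sub => x y /adjP[g gF Eg]; apply: connect1.
by apply/adjP; exists g; first exact: subsetP gF.
Qed.

Lemma acyclicS F F' : F \subset F' -> acyclic ends F' -> acyclic ends F.
Proof.
move=> sFF' acF' g gF; apply: contra (acF' g (subsetP sFF' g gF)).
exact/connect_adjS/setSD.
Qed.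

Lemma connect_setU1 G g x y : conn (g |: G) x y ->
  [\/ conn G x y,
      conn G x (ends g).1 /\ conn G (ends g).2 y
    | conn G x (ends g).2 /\ conn G (ends g).1 y].
Proof.
set a := (ends g).1; set b := (ends g).2.
move: y; apply: connect_ind => [|y z Py /adjP[h]]; first by apply: Or31.
have extend v : conn G v y -> adj ends G y z -> conn G v z.
  by move=> cvy /connect1; apply: connect_trans.
rewrite in_setU1 => /orP[/eqP-> {h}|hG Eh]; last first.
  have ayz : adj ends G y z by apply/adjP; exists h.
  case: Py => [cxy|[cxa cby]|[cxb cay]].
  - by apply: Or31; apply: extend.
  - by apply: Or32; split; last apply: extend.
  - by apply: Or33; split; last apply: extend.
move=> Eg; have [[ya zb]|[yb za]] : y = a /\ z = b \/ y = b /\ z = a.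
  by rewrite /a /b; case: Eg => ->; [left | right].
- subst y z.
  by case: Py => [|[]|[]] *; [apply: Or32 | apply: Or32 | apply: Or31].
- subst y z.
  by case: Py => [|[]|[]] *; [apply: Or33 | apply: Or31 | apply: Or33].
Qed.

Lemma acyclicU1 F g :
  acyclic ends F -> ~~ conn F (ends g).1 (ends g).2 -> acyclic ends (g |: F).
Proof.
move=> acF ncg h; have [-> _|ngh] := eqVneq h g.
  apply: contra ncg; apply/connect_adjS/subsetP => k.
  by rewrite !inE => /andP[/negPf->].
rewrite in_setU1 (negPf ngh) /= => hF; apply/negP.
have -> : (g |: F) :\ h = g |: (F :\ h).
  by apply/setP => k; rewrite !inE; case: eqVneq => // ->; rewrite (negPf ngh).
have conn_h := connect_adjS (subsetDl F [set h]).
have ch := connect_edge hF.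
case/connect_setU1 => [|[c1 c2]|[c1 c2]]; first exact/negP/acF.
- move/negP: ncg; apply; rewrite connect_adjC in c1; rewrite connect_adjC in c2.
  exact: connect_trans (conn_h _ _ c1) (connect_trans ch (conn_h _ _ c2)).
- move/negP: ncg; apply; rewrite connect_adjC in ch.
  exact: connect_trans (conn_h _ _ c2) (connect_trans ch (conn_h _ _ c1)).
Qed.

Definition acyclicb F :=
  [forall g in F, ~~ conn (F :\ g) (ends g).1 (ends g).2].

Lemma acyclicP F : reflect (acyclic ends F) (acyclicb F).
Proof. exact: (iffP forall_inP). Qed.

Lemma acyclic_extend_spanning_tree X F B :
  acyclic ends F -> F \subset B -> connected_on ends X B ->
  exists T : {set I}, [/\ F \subset T, T \subset B & is_spanning_tree ends X T].
Proof.
move=> acF sFB conB.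
pose P (T : {set I}) := [&& acyclicb T, F \subset T & T \subset B].
have [T /maxsetP[/and3P[/acyclicP acT sFT sTB] maxT] _] :
    {T | maxset P T & F \subset T}.
  by apply: maxset_exists; rewrite /P sFB subxx !andbT; apply/acyclicP.
have spanB g : g \in B -> conn T (ends g).1 (ends g).2.
  move=> gB; apply/negPn/negP => ncg.
  have gT : g \notin T by apply: contra ncg => /connect_edge.
  suff /maxT/(_ (subsetUr _ _)) eqT : P (g |: T) by rewrite -eqT setU11 in gT.
  rewrite /P (subset_trans sFT (subsetUr _ _)) subUset sub1set gB sTB !andbT.
  exact/acyclicP/acyclicU1.
exists T; split=> //; split=> // x y xX yX.
apply: connect_sub (conB x y xX yX) => u v /adjP[g gB [] Eg].
  by have := spanB g gB; rewrite Eg.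
by have := spanB g gB; rewrite Eg connect_adjC.
Qed.

End Graphs.

Section Contraction.
Variables (W W' I : finType) (ends : I -> W * W) (f : W -> W').
Implicit Types (F K D : {set I}).

Local Notation conn F := (connect (adj ends F)).

Definition contract (g : I) : W' * W' := (f (ends g).1, f (ends g).2).

Lemma connect_contract F F' :
  {in F, forall g, g \in F' \/ f (ends g).1 = f (ends g).2} ->
  forall x y, conn F x y -> connect (adj contract F') (f x) (f y).
Proof.
move=> hF x; apply: connect_ind => // y z cxy /adjP[g gF Eg].
have [gF'|fg] := hF g gF.
  apply: connect_trans cxy (connect1 _); apply/adjP; exists g => //.
  by rewrite /contract; case: Eg => ->; [left | right].
by case: Eg fg => -> /= fg; rewrite ?fg // -fg.
Qed.

Lemma connect_uncontract F K x y :
  K \subset F -> (forall u v, f u = f v -> conn F u v) ->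
  connect (adj contract K) (f x) (f y) -> conn F x y.
Proof.
move=> sKF fibre cxy.
suff: forall Y, connect (adj contract K) (f x) Y -> forall z, f z = Y -> conn F x z.
  by move/(_ _ cxy y erefl).
apply: connect_ind => [z /esym/fibre // | Y Z PY /adjP[g gK Eg] z fz].
have cg := connect_edge ends (subsetP sKF g gK).
case: Eg => -[f1 f2].
- by apply: connect_trans (PY _ f1) (connect_trans cg (fibre _ _ _)); rewrite f2 fz.
- rewrite connect_adjC in cg.
  by apply: connect_trans (PY _ f2) (connect_trans cg (fibre _ _ _)); rewrite f1 fz.
Qed.

Lemma acyclicU_contract D K :
  acyclic ends D -> {in D, forall g, f (ends g).1 = f (ends g).2} ->
  acyclic contract K -> acyclic ends (D :|: K).
Proof.
move=> acD fD; elim: {K}_.+1 {-2}K (ltnSn #|K|) => // n IHn K leKn acK.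
have [->|[s sK]] := set_0Vmem K; first by rewrite setU0.
rewrite -(setD1K sK) setUCA; apply: acyclicU1.
  apply: IHn; first by rewrite (cardsD1 s K) sK add1n ltnS in leKn.
  exact: acyclicS (subsetDl _ _) acK.
apply: contra (acK s sK) => /connect_contract; apply => g.
by rewrite !inE => /orP[/fD|/andP[-> ->]]; [right | left].
Qed.

End Contraction.

Section Components.
Variables (V : finType) (m : nat) (ends : 'I_m -> V * V) (S : {set 'I_m}).

Lemma eq_compo x y :
  compo ends S x = compo ends S y <-> connect (adj ends (~: S)) x y.
Proof.
split=> [Exy | cxy].
  have : y \in compo ends S y by rewrite inE connect0.
  by rewrite -Exy inE.
apply/setP => z; rewrite !inE; apply/idP/idP; last exact: connect_trans.
by apply: connect_trans; rewrite connect_adjC.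
Qed.

Lemma compo_edge g : g \notin S -> compo ends S (ends g).1 = compo ends S (ends g).2.
Proof. by move=> gS; apply/eq_compo/connect_edge; rewrite inE. Qed.

Lemma HendsE : Hends ends S = contract ends (compo ends S).
Proof. by []. Qed.

Lemma Hedges_sub : Hedges ends S \subset S.
Proof. by apply/subsetP => g; rewrite inE => /andP[]. Qed.

End Components.

Section Dependencies.
Variables (I : finType) (A : rel I).
Implicit Types (F T : {set I}).

Lemma depSS F F' : F \subset F' -> depS A F \subset depS A F'.
Proof. by move=> sFF'; apply/bigcupsP => e eF; apply: bigcup_sup (subsetP sFF' e eF). Qed.

Lemma lu_satisfies_depE T :
  lu_satisfies A (fun e => #|dep A e|) (fun e => #|dep A e|) T <->
  {in T, forall e, dep A e \subset T}.
Proof.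
split=> closT e eT; last by rewrite (setIidPl (closT e eT)) leqnn.
have /andP[le _] := closT e eT.
by apply/setIidPl/eqP; rewrite eqEcard subsetIl.
Qed.

End Dependencies.

Lemma shiftA_into_Sset m t e' e :
  shiftA m t e' e -> (e' \notin Sset m t) && (e \in Sset m t).
Proof.
case/andP=> lt_e't /eqP Ee.
by rewrite !inE Ee (leqNgt t e') lt_e't leq_addl ltn_add2r.
Qed.

Section TreeCorrespondence.
Variables (V : finType) (m : nat) (ends : 'I_m -> V * V).
Variables (S : {set 'I_m}) (A : rel 'I_m).

Lemma H_spanning_tree_of_tree T :
  is_spanning_tree ends setT T -> {in T, forall e, dep A e \subset T} ->
  exists S' : {set 'I_m}, S' \subset S /\ S' \subset T /\
    H_spanning_tree ends S S' /\ acyclic ends (depS A S').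
Proof.
case=> conT acT closT; set HT := T :&: Hedges ends S.
have conH : connected_on (Hends ends S) (comps ends S) HT.
  move=> _ _ /imsetP[x _ ->] /imsetP[y _ ->]; rewrite HendsE.
  apply: connect_contract (conT x y (in_setT x) (in_setT y)) => g gT.
  have [gH|] := boolP (g \in Hedges ends S); first by left; rewrite inE gT gH.
  by rewrite inE negb_and negbK => /orP[/(compo_edge ends)|/eqP] Eg; right.
have ac0 : acyclic (Hends ends S) set0 by move=> g; rewrite inE.
have [S' [_ sS'HT [conS' acS']]] := acyclic_extend_spanning_tree ac0 (sub0set HT) conH.
have sS'H : S' \subset Hedges ends S := subset_trans sS'HT (subsetIr _ _).
have sS'T : S' \subset T := subset_trans sS'HT (subsetIl _ _).
exists S'; split; first exact: subset_trans sS'H (Hedges_sub _ _).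
split=> //; split; first by rewrite /H_spanning_tree (setIidPl sS'H).
by apply: acyclicS acT; apply/bigcupsP => e /(subsetP sS'T)/closT.
Qed.

Hypothesis A_into_S : forall e' e, A e' e -> (e' \notin S) && (e \in S).

Lemma depS_subsetC F : depS A F \subset ~: S.
Proof.
apply/bigcupsP => e _; apply/subsetP => e'; rewrite !inE => /A_into_S.
by case/andP.
Qed.

Lemma dep_notin e : e \notin S -> dep A e = set0.
Proof.
move=> eS; apply/setP => e'; rewrite !inE; apply: contraNF eS => /A_into_S.
by case/andP.
Qed.

Lemma tree_of_H_spanning_tree S' :
  H_spanning_tree ends S S' -> acyclic ends (depS A S') ->
  exists T, is_spanning_tree ends setT T /\ {in T, forall e, dep A e \subset T}.
Proof.
case=> conH acH acD'; set S2 := S' :&: Hedges ends S; set D := depS A S2.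
have sDS : D \subset ~: S := depS_subsetC S2.
have compoD : {in D, forall g, compo ends S (ends g).1 = compo ends S (ends g).2}.
  by move=> g /(subsetP sDS); rewrite inE; apply: compo_edge.
have acD : acyclic ends D := acyclicS (depSS A (subsetIl _ _)) acD'.
have acDS2 : acyclic ends (D :|: S2) := acyclicU_contract acD compoD acH.
set B := (D :|: S2) :|: ~: S.
have conB : connected_on ends setT B.
  move=> x y _ _; apply: (connect_uncontract (K := S2)) (conH _ _ _ _).
  - exact: subset_trans (subsetUr D S2) (subsetUl _ _).
  - by move=> u v /eq_compo; apply/connect_adjS/subsetUr.
  - exact: imset_f.
  - exact: imset_f.
have [T [sDT sTB spT]] := acyclic_extend_spanning_tree acDS2 (subsetUl _ _) conB.
exists T; split=> // e eT; have [eS2|eS2] := boolP (e \in S2).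
  exact: subset_trans (bigcup_sup e eS2) (subset_trans (subsetUl D S2) sDT).
rewrite dep_notin ?sub0set //.
move: (subsetP sTB e eT); rewrite !in_setU (negbTE eS2) orbF in_setC.
by case/orP=> [/(subsetP sDS)|]; rewrite ?inE.
Qed.

End TreeCorrespondence.

Theorem lemma2 (V : finType) (m : nat) (ends : 'I_m -> V * V) (t : nat) :
  simple_graph ends ->
  t <= m./2 ->
  let A := shiftA m t in
  let l := fun e => #|dep A e| in
  let u := fun e => #|dep A e| in
  let S := Sset m t in
  ((exists S' : {set 'I_m}, S' \subset S /\ H_spanning_tree ends S S' /\
       acyclic ends (depS A S')) ->
     exists T : {set 'I_m}, is_spanning_tree ends setT T /\ lu_satisfies A l u T)
  /\
  (forall T : {set 'I_m}, is_spanning_tree ends setT T -> lu_satisfies A l u T ->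
     exists S' : {set 'I_m}, S' \subset S /\ S' \subset T /\
       H_spanning_tree ends S S' /\ acyclic ends (depS A S')).
Proof.
move=> _ _ A l u S; split.
- case=> S' [_ [HS' acD]].
  have [T [spT closT]] := tree_of_H_spanning_tree (@shiftA_into_Sset m t) HS' acD.
  by exists T; split; last exact/lu_satisfies_depE.
- by move=> T spT /lu_satisfies_depE; apply: H_spanning_tree_of_tree.
Qed.
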